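(* For $n\ge1$, \begin{align*} \left|\Pi_n\wr C_2(1^11^1,1^12^2)\right|&=\sum_{j\geq 0}\sum_{i=1}^n \binom{i-1}{j}\binom{n-i}{j}j! +\sum_{j\geq 0} \sum_{i=2}^n(i-1)\binom{i-2}{j}\binom{n-i}{j}j!\\ &\quad+ \sum_{j\geq 0}\sum_{i=1}^{n-1}\binom{i-1}{j}\binom{n-i-1}{j}j!+1. \end{align*}
   Context: For $n\ge0$ let $[n]=\{1,\dots,n\}$. A $2$-colored set partition of $[n]$ is a set partition of $[n]$ together with an assignment of a color from $\{1,2\}$ to each element; $\Pi_n\wr C_2$ is the set of these. For a set $S$ of patterns, $\Pi_n\wr C_2(S)$ is the set of such colored partitions avoiding every pattern in $S$ in the pattern sense. For the patterns used here: $\sigma$ contains $1^11^1$ iff two elements in the same block have the same color; $\sigma$ contains $1^12^2$ iff there are $i<j$ in different blocks with $i$ colored $1$ and $j$ colored $2$. Binomial coefficients $\binom{a}{b}$ with $b>a$ or $a<0$ are $0$. *)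

From mathcomp Require Import all_boot.
Set Implicit Arguments. Unset Strict Implicit. Unset Printing Implicit Defensive.

(* Ground set [n] = {1,...,n} is modelled by 'I_n = {0,...,n-1} (element k+1
   is represented by k; the order is preserved). *)
Definition color := 'I_2.
Definition col1 : color := @Ordinal 2 0 isT.
Definition col2 : color := @Ordinal 2 1 isT.

Definition colored_partition (n : nat) :=
  ({set {set 'I_n}} * {ffun 'I_n -> color})%type.

Definition is_colored_set_partition n (s : colored_partition n) : bool :=
  partition s.1 [set: 'I_n].

Definition same_block n (P : {set {set 'I_n}}) (x y : 'I_n) : bool :=
  [exists B in P, (x \in B) && (y \in B)].

Definition contains_11_11 n (s : colored_partition n) : bool :=
  [exists x : 'I_n, exists y : 'I_n,
     [&& x < y, same_block s.1 x y & s.2 x == s.2 y]].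

Definition contains_11_22 n (s : colored_partition n) : bool :=
  [exists i : 'I_n, exists j : 'I_n,
     [&& i < j, ~~ same_block s.1 i j, s.2 i == col1 & s.2 j == col2]].

Definition avoiders (n : nat) : {set colored_partition n} :=
  [set s | [&& is_colored_set_partition s, ~~ contains_11_11 s
            & ~~ contains_11_22 s]].

From mathcomp Require Import all_boot zify.
Set Implicit Arguments. Unset Strict Implicit. Unset Printing Implicit Defensive.

(* Avoiding 1^1 1^1 makes every block consist of at most two elements of different
   colors.  Avoiding 1^1 2^2 forces every pair i < j with i colored 1 and j colored 2
   into one block, so no element lies in two such forced pairs; this leaves only the
   colorings 2^p 1^(n-p) and 2^p 1 2 1^(n-p-2).  For such a coloring the remaining
   blocks of size two form an arbitrary partial matching between the unforced elements
   of color 2 and those of color 1 (p and n-p, resp. p and n-p-2 of them), and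
   K_{p,q} has sum_j C(p,j) C(q,j) j! partial matchings.  Summing over p and expanding
   with the recurrence in q yields the three double sums. *)


Fixpoint nmatchings (p q : nat) : nat :=
  if p is p'.+1 then nmatchings p' q + q * nmatchings p' q.-1 else 1.

Lemma nmatchingsE p q N : p < N ->
  nmatchings p q = \sum_(j < N) 'C(p, j) * 'C(q, j) * j`!.
Proof.
elim: p q N => [|p IHp] q [|N] //= ltpN.
  by rewrite big_ord_recl /= !bin0 fact0 big1.
rewrite big_ord_recl /= !bin0 fact0.
under eq_bigr => j _ do rewrite /bump /= add1n binS mulnDl mulnDl.
rewrite big_split /= addnA.
have -> : 1 * 1 * 1 + \sum_(j < N) 'C(p, j.+1) * 'C(q, j.+1) * j.+1`! = nmatchings p q.
  by rewrite (IHp q N.+1 (ltnW ltpN)) big_ord_recl /= !bin0 fact0.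
congr (_ + _); rewrite (IHp q.-1 N) // big_distrr /=.
apply: eq_bigr => j _.
have := mul_bin_diag q j; rewrite factS.
move: 'C(p, j) 'C(q.-1, j) 'C(q, j.+1) j`! => a b d f qbE.
transitivity (a * f * (q * b)); first by lia.
by rewrite qbE; lia.
Qed.

Lemma nmatchingsC p q : nmatchings p q = nmatchings q p.
Proof.
rewrite (@nmatchingsE p q (p + q).+1) ?(@nmatchingsE q p (p + q).+1); try lia.
by apply: eq_bigr => j _; rewrite (mulnC 'C(p, j)).
Qed.

Lemma nmatchingsSr p q : nmatchings p q.+1 = nmatchings p q + p * nmatchings p.-1 q.
Proof.
by rewrite nmatchingsC /= [nmatchings q p]nmatchingsC [nmatchings q p.-1]nmatchingsC.
Qed.

Lemma nmatchings0r p : nmatchings p 0 = 1.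
Proof. by elim: p => //= p ->. Qed.

Lemma sum_nmatchings_formula n :
  \sum_(p < n.+1) nmatchings p (n - p) + \sum_(p < n.-1) nmatchings p (n - p.+2) =
    \sum_(0 <= j < n.+1) \sum_(1 <= i < n.+1) 'C(i - 1, j) * 'C(n - i, j) * j`!
  + \sum_(0 <= j < n.+1) \sum_(2 <= i < n.+1) (i - 1) * 'C(i - 2, j) * 'C(n - i, j) * j`!
  + \sum_(0 <= j < n.+1) \sum_(1 <= i < n) 'C(i - 1, j) * 'C(n - i - 1, j) * j`!
  + 1.
Proof.
rewrite [X in _ = X + _ + _ + _]exchange_big [X in _ = _ + X + _ + _]exchange_big.
rewrite [X in _ = _ + _ + X + _]exchange_big /= !big_add1 /= addnAC.
congr (_ + _); last first.
  rewrite big_mkord; apply: eq_bigr => -[p ltpn] _.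
  rewrite big_mkord (@nmatchingsE _ _ n.+1) /=; last by lia.
  by apply: eq_bigr => j _; rewrite subSS subn0 -subnDA addn1.
rewrite big_ord_recr /= subnn nmatchings0r; congr (_ + _).
case: n => [|n]; first by rewrite big_ord0 !big_geq.
have split_last (p : 'I_n.+1) : nmatchings p (n.+1 - p) =
    nmatchings p (n - p) + p * nmatchings p.-1 (n - p).
  by rewrite -nmatchingsSr; congr nmatchings; case: p => /= p; lia.
under eq_bigr => p _ do rewrite split_last.
rewrite big_split /=; congr (_ + _).
  rewrite big_mkord; apply: eq_bigr => -[p ltpn] _.
  rewrite (@nmatchingsE _ _ n.+2) /=; last by lia.
  by rewrite big_mkord; apply: eq_bigr => j _; rewrite subn1.
rewrite big_ord_recl /= mul0n add0n big_mkord; apply: eq_bigr => -[p ltpn] _.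
rewrite (@nmatchingsE _ _ n.+2) /=; last by lia.
rewrite big_mkord big_distrr; apply: eq_bigr => j _.
by rewrite /bump /= add1n !subSS !subn0 !mulnA.
Qed.

Section Matchings.
Variable T : finType.
Implicit Types (X Y : {set T}) (M : {set T * T}).

Definition matching M : bool :=
  [forall m1 in M, forall m2 in M, ((m1.1 == m2.1) || (m1.2 == m2.2)) ==> (m1 == m2)].

Definition matchings X Y : {set {set T * T}} :=
  [set M : {set T * T} | (M \subset setX X Y) && matching M].

Lemma matchingP (M : {set T * T}) :
  reflect (forall m1 m2, m1 \in M -> m2 \in M ->
             (m1.1 == m2.1) || (m1.2 == m2.2) -> m1 = m2) (matching M).
Proof.
apply: (iffP forall_inP) => [mM m1 m2 m1M m2M e | mM m1 m1M].
  by move/forall_inP: (mM m1 m1M) => /(_ m2 m2M) /implyP /(_ e) /eqP.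
by apply/forall_inP => m2 m2M; apply/implyP => e; apply/eqP; apply: mM.
Qed.

Lemma matchingsP X Y (M : {set T * T}) :
  reflect [/\ forall x y, (x, y) \in M -> (x \in X) && (y \in Y),
              forall x y1 y2, (x, y1) \in M -> (x, y2) \in M -> y1 = y2 &
              forall x1 x2 y, (x1, y) \in M -> (x2, y) \in M -> x1 = x2]
          (M \in matchings X Y).
Proof.
rewrite inE; apply: (iffP andP) => [[/subsetP sMXY /matchingP mM] | [sMXY f1 f2]].
  split=> [x y /sMXY | x y1 y2 h1 h2 | x1 x2 y h1 h2]; first by rewrite inE.
  - by have := mM _ _ h1 h2; rewrite eqxx => /(_ isT) [].
  - by have := mM _ _ h1 h2; rewrite eqxx orbT => /(_ isT) [].
split; first by apply/subsetP => -[x y] /sMXY; rewrite inE.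
apply/matchingP => -[x1 y1] [x2 y2] h1 h2 /orP[] /eqP /= e; rewrite e in h1 *.
  by rewrite (f1 _ _ _ h1 h2).
by rewrite (f2 _ _ _ h1 h2).
Qed.

Lemma matchings0l Y : matchings set0 Y = [set set0].
Proof.
apply/setP => M; rewrite in_set1; apply/matchingsP/eqP => [[sM _ _] | ->].
  by apply/setP => -[x y]; rewrite inE; apply/negbTE/negP => /sM; rewrite inE.
by split=> [x y | x y1 y2 | x1 x2 y]; rewrite inE.
Qed.

Section FixedVertex.
Variables (X Y : {set T}) (x : T).
Hypothesis xX : x \in X.

Lemma matchings_unmatched :
  [set M in matchings X Y | [forall y, (x, y) \notin M]] = matchings (X :\ x) Y.
Proof.
apply/setP => M; rewrite inE.
apply/andP/matchingsP => [[/matchingsP[sM f1 f2] /forallP unm] | [sM f1 f2]].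
  split=> // x' y xyM; rewrite !inE -andbA sM // andbT.
  by apply: contraTneq xyM => ->; apply: unm.
split; last by apply/forallP => y; apply/negP => /sM; rewrite !inE eqxx.
by apply/matchingsP; split=> // x' y /sM; rewrite inE -andbA => /andP[].
Qed.

Lemma matchings_through y : y \in Y ->
  [set M in matchings X Y | (x, y) \in M] =
  [set (x, y) |: N | N in matchings (X :\ x) (Y :\ y)].
Proof.
move=> yY; apply/setP => M; rewrite inE; apply/andP/imsetP.
  move=> [/matchingsP[sM f1 f2] xyM]; exists (M :\ (x, y)); last by rewrite setD1K.
  apply/matchingsP; split=> [x' y' | x' y1 y2 | x1 x2 y'].
  - rewrite !inE => /andP[ne xyM']; case/andP: (sM _ _ xyM') => -> ->.
    rewrite !andbT; apply/andP; split; apply: contra_neq ne => e; rewrite e in xyM' *.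
      by rewrite (f1 _ _ _ xyM' xyM).
    by rewrite (f2 _ _ _ xyM' xyM).
  - by rewrite !inE => /andP[_ h1] /andP[_ h2]; apply: f1 h1 h2.
  - by rewrite !inE => /andP[_ h1] /andP[_ h2]; apply: f2 h1 h2.
move=> [N /matchingsP[sN f1 f2] ->]; split; last exact: setU11.
have sN' x' y' : (x', y') \in N -> [&& x' != x, y' != y, x' \in X & y' \in Y].
  by move/sN; rewrite !inE -!andbA => /and4P[-> -> -> ->].
apply/matchingsP; split=> [x' y' | x' y1 y2 | x1 x2 y']; rewrite !inE xpair_eqE.
- case/orP=> [/andP[/eqP-> /eqP->] | xyN]; first by rewrite xX yY.
  by case/and4P: (sN' _ _ xyN) => _ _ -> ->.
- case/orP=> [/andP[/eqP-> /eqP->] | h1]; rewrite xpair_eqE.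
    by case/orP=> [/andP[_ /eqP->] // | /sN' /and4P[]]; rewrite eqxx.
  case/orP=> [/andP[/eqP ex _] | h2]; last exact: f1 h1 h2.
  by case/and4P: (sN' _ _ h1); rewrite ex eqxx.
- case/orP=> [/andP[/eqP-> /eqP->] | h1]; rewrite xpair_eqE.
    by case/orP=> [/andP[/eqP-> _] // | /sN' /and4P[_]]; rewrite eqxx.
  case/orP=> [/andP[_ /eqP ey] | h2]; last exact: f2 h1 h2.
  by case/and4P: (sN' _ _ h1); rewrite ey eqxx.
Qed.

End FixedVertex.

Lemma card_matchings X Y : #|matchings X Y| = nmatchings #|X| #|Y|.
Proof.
move: {2}#|X| (erefl #|X|) => p; elim: p X Y => [|p IHp] X Y cardX.
  by move/eqP: cardX; rewrite cards_eq0 => /eqP->; rewrite matchings0l cards1 cards0.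
have /set0Pn[x xX] : X != set0 by rewrite -card_gt0 cardX.
have cardXx : #|X :\ x| = p by move: cardX; rewrite (cardsD1 x) xX => -[].
have unmatched_or_partner M : M \in matchings X Y ->
    [forall y, (x, y) \notin M] + \sum_(y in Y) ((x, y) \in M) = 1.
  case/matchingsP=> sM f1 _.
  have [/forallP unm | /forallPn[y0 /negbNE xy0M]] := boolP [forall y, (x, y) \notin M].
    by rewrite big1 // => y _; rewrite (negbTE (unm y)).
  rewrite (bigD1 y0) ?xy0M /=; last by case/andP: (sM _ _ xy0M).
  rewrite big1 // => y /andP[_ ne]; apply/eqP; rewrite eqb0; apply: contra ne => xyM.
  by rewrite (f1 _ _ _ xyM xy0M).
have xy_notin y N : N \in matchings (X :\ x) (Y :\ y) -> (x, y) \notin N.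
  by case/matchingsP=> sN _ _; apply/negP => /sN; rewrite !inE eqxx.
have sum_count (P : pred {set T * T}) :
    \sum_(M in matchings X Y) P M = #|[set M in matchings X Y | P M]|.
  by rewrite -sum1dep_card big_mkcondr; apply: eq_bigr => M _; case: (P M).
rewrite -sum1_card.
under eq_bigr => M SM do rewrite -(unmatched_or_partner M SM).
rewrite big_split exchange_big /= sum_count matchings_unmatched // IHp //=.
under eq_bigr => y yY.
  rewrite sum_count matchings_through // card_in_imset
    => [|N1 N2 /xy_notin N1xy /xy_notin N2xy e].
    rewrite IHp // cardXx (_ : #|Y :\ y| = #|Y|.-1); last by rewrite [#|Y|](cardsD1 y) yY.
    over.
  by rewrite -(setU1K N1xy) -(setU1K N2xy) e.
by rewrite sum_nat_const cardX cardXx.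
Qed.
End Matchings.

Lemma ord2_neq (a b d : 'I_2) : a != b -> a != d -> b = d.
Proof. by case: a b d => [[|[|?]] ?] [[|[|?]] ?] [[|[|?]] ?] //= _ _; apply: val_inj. Qed.

Lemma col12F : (col1 == col2) = false. Proof. by []. Qed.
Lemma col21F : (col2 == col1) = false. Proof. by []. Qed.

Lemma neq_colors (a b : color) :
  a != b -> (a == col2) && (b == col1) || (b == col2) && (a == col1).
Proof. by case: a b => [[|[|?]] ?] [[|[|?]] ?]. Qed.

Section SameBlock.
Variables (n : nat) (P : {set {set 'I_n}}).
Hypothesis partP : partition P [set: 'I_n].

Lemma same_blockE x y : same_block P x y = (y \in pblock P x).
Proof.
have [/eqP coverP tiP _] := and3P partP.
apply/existsP/idP => [[B /and3P[BP xB yB]] | yPx]; first by rewrite (def_pblock tiP BP xB).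
have xP : x \in cover P by rewrite coverP inE.
by exists (pblock P x); rewrite pblock_mem // mem_pblock xP yPx.
Qed.

Lemma same_block_eqr x y :
  same_block P x y -> same_block P x =1 same_block P y.
Proof.
move=> + z; rewrite !same_blockE.
by have [_] := pblock_equivalence partP (in_setT x) (in_setT y) (in_setT z).
Qed.

Lemma same_block_refl x : same_block P x x.
Proof. by rewrite same_blockE mem_pblock (cover_partition partP) inE. Qed.

Lemma same_block_sym x y : same_block P x y -> same_block P y x.
Proof. by move=> xy; rewrite -(same_block_eqr xy) same_block_refl. Qed.

Lemma same_block_trans x y z :
  same_block P x y -> same_block P y z -> same_block P x z.
Proof. by move=> xy; rewrite (same_block_eqr xy). Qed.

End SameBlock.

Section ColoredPartitions.
Variable n : nat.
Implicit Types (P : {set {set 'I_n}}) (c : {ffun 'I_n -> color}).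
Implicit Types (M : {set 'I_n * 'I_n}) (x y z : 'I_n).

Definition forced c x y : bool :=
  ((x < y) && (c x == col1) && (c y == col2)) ||
  ((y < x) && (c y == col1) && (c x == col2)).

Lemma forcedC c x y : forced c x y = forced c y x.
Proof. by rewrite /forced orbC. Qed.

Lemma forced_color c x y : forced c x y -> c x != c y.
Proof. by case/orP=> /andP[/andP[_ /eqP->] /eqP->]. Qed.

Definition free c (k : color) : {set 'I_n} :=
  [set x | (c x == k) && [forall y, ~~ forced c x y]].

Lemma free_color c k x : x \in free c k -> c x = k.
Proof. by rewrite inE => /andP[/eqP]. Qed.

Lemma free_forced c k x y : x \in free c k -> forced c x y = false.
Proof. by rewrite inE => /andP[_ /forallP/(_ y)/negbTE]. Qed.

Lemma avoidersP P c :
  reflect [/\ partition P [set: 'I_n],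
              forall x y, x != y -> same_block P x y -> c x != c y &
              forall x y, forced c x y -> same_block P x y]
          ((P, c) \in avoiders n).
Proof.
rewrite inE /is_colored_set_partition /=.
apply: (iffP and3P) => [[partP /existsPn no11 /existsPn no12] | [partP rainbow forcedP]].
  split=> // [x y | x y].
    wlog ltxy : x y / x < y => [wlog_lt|] neq xy.
      have [ltxy | ltyx | /val_inj eqxy] := ltngtP x y; first exact: wlog_lt.
        by rewrite eq_sym wlog_lt 1?eq_sym // same_block_sym.
      by rewrite eqxy eqxx in neq.
    by apply: contraNneq (no11 x) => cxy; apply/existsP; exists y; rewrite /= ltxy xy cxy eqxx.
  case/orP=> /andP[/andP[lt cx] cy].
    by apply: contraNT (no12 x) => nxy; apply/existsP; exists y; rewrite /= lt nxy cx cy.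
  apply: same_block_sym => //.
  by apply: contraNT (no12 y) => nyx; apply/existsP; exists x; rewrite /= lt nyx cx cy.
split=> //.
  apply/existsPn => x; apply/existsPn => y; apply/and3P => -[ltxy xy /eqP cxy].
  by move: (rainbow x y); rewrite neq_ltn ltxy cxy eqxx => /(_ isT xy).
apply/existsPn => x; apply/existsPn => y; apply/and4P => -[ltxy /negP nxy cx cy].
by apply: nxy; apply: forcedP; rewrite /forced ltxy cx cy.
Qed.

Lemma free21 c x : x \in free c col2 -> x \notin free c col1.
Proof. by move/free_color=> cx; rewrite inE cx. Qed.

Definition block_matching c P : {set 'I_n * 'I_n} :=
  [set m in setX (free c col2) (free c col1) | same_block P m.1 m.2].

Lemma mem_block_matching c P x y : ((x, y) \in block_matching c P) =
  [&& x \in free c col2, y \in free c col1 & same_block P x y].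
Proof. by rewrite [in LHS]in_set in_setX andbA. Qed.

Definition linked c M x y : bool :=
  [|| x == y, (x, y) \in M, (y, x) \in M | forced c x y].

Lemma same_block_linked P c x y : (P, c) \in avoiders n ->
  same_block P x y = linked c (block_matching c P) x y.
Proof.
case/avoidersP=> partP rainbow forcedP; apply/idP/idP; last first.
  case/or4P=> [/eqP-> | | | /forcedP //]; first exact: same_block_refl.
    by rewrite inE => /andP[].
  by rewrite inE => /andP[_ /(same_block_sym partP)].
move=> xy; have [-> | neq] := eqVneq x y; first by rewrite /linked eqxx.
(* a forced partner w of u lies in u's block, so w = v, or v and w would share a color *)
have forced_partner u v w : same_block P u v -> u != v -> forced c u w -> forced c u v.
  move=> uv neq_uv fuw; have [<- // | neq_wv] := eqVneq w v.
  have vw := same_block_trans partP (same_block_sym partP uv) (forcedP _ _ fuw).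
  have := rainbow _ _ neq_wv (same_block_sym partP vw).
  by rewrite (ord2_neq (rainbow _ _ neq_uv uv) (forced_color fuw)) eqxx.
have [/existsP[w fxw] | /existsPn freex] := boolP [exists w, forced c x w].
  by rewrite /linked (forced_partner _ _ _ xy neq fxw) !orbT.
have [/existsP[w fyw] | /existsPn freey] := boolP [exists w, forced c y w].
  rewrite /linked forcedC (forced_partner _ _ _ (same_block_sym partP xy) _ fyw) ?orbT //.
  by rewrite eq_sym.
have cxy := rainbow _ _ neq xy.
rewrite /linked !inE /= (negbTE neq) xy (same_block_sym partP xy).
rewrite (_ : [forall w, _] = true); last exact/forallP.
rewrite (_ : [forall w, ~~ forced c y w] = true) ?andbT; last exact/forallP.
by case/orP: (neq_colors cxy) => ->; rewrite ?orbT.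
Qed.

Lemma block_matching_matchings P c : (P, c) \in avoiders n ->
  block_matching c P \in matchings (free c col2) (free c col1).
Proof.
case/avoidersP=> partP rainbow _.
have same_color_same_block u v : c u = c v -> same_block P u v -> u = v.
  by move=> cuv uv; apply/eqP; apply: contraTT uv => /rainbow; rewrite cuv eqxx => /implyP.
apply/matchingsP; split=> [x y | x y1 y2 | x1 x2 y]; rewrite !mem_block_matching.
- by case/and3P=> -> ->.
- case/and3P=> _ /free_color c1 xy1 /and3P[_ /free_color c2 xy2].
  apply: same_color_same_block; first by rewrite c1 c2.
  exact: same_block_trans (same_block_sym partP xy1) xy2.
- case/and3P=> /free_color c1 _ x1y /and3P[/free_color c2 _ x2y].
  apply: same_color_same_block; first by rewrite c1 c2.
  exact: same_block_trans x1y (same_block_sym partP x2y).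
Qed.

Section MatchingPartition.
Variable c : {ffun 'I_n -> color}.
Hypothesis forced_uniq : forall x y z, forced c x y -> forced c x z -> y = z.
Variable M : {set 'I_n * 'I_n}.
Hypothesis matchingM : M \in matchings (free c col2) (free c col1).

Lemma linkedC x y : linked c M x y = linked c M y x.
Proof. by rewrite /linked eq_sym forcedC; case: (_ \in M); case: (_ \in M); rewrite ?orbT. Qed.

Lemma linked_uniq x y z : x != y -> x != z -> linked c M x y -> linked c M x z -> y = z.
Proof.
have [sM f1 f2] := matchingsP _ _ _ matchingM.
have inX u v : (u, v) \in M -> u \in free c col2 by move/sM/andP=> [].
have inY u v : (u, v) \in M -> v \in free c col1 by move/sM/andP=> [].
rewrite /linked => /negbTE-> /negbTE-> /or4P[// | xy | yx | fxy] /or4P[// | xz | zx | fxz].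
- exact: f1 xy xz.
- by have := free21 (inX _ _ xy); rewrite (inY _ _ zx).
- by rewrite (free_forced _ (inX _ _ xy)) in fxz.
- by have := free21 (inX _ _ xz); rewrite (inY _ _ yx).
- exact: f2 yx zx.
- by rewrite (free_forced _ (inY _ _ yx)) in fxz.
- by rewrite (free_forced _ (inX _ _ xz)) in fxy.
- by rewrite (free_forced _ (inY _ _ zx)) in fxy.
- exact: forced_uniq fxy fxz.
Qed.

Lemma linked_color x y : x != y -> linked c M x y -> c x != c y.
Proof.
have [sM _ _] := matchingsP _ _ _ matchingM.
have colors u v : (u, v) \in M -> (c u == col2) && (c v == col1).
  by case/sM/andP=> /free_color-> /free_color->; rewrite !eqxx.
rewrite /linked => /negbTE-> /or4P[// | /colors | /colors | /forced_color //].
  by case/andP=> /eqP-> /eqP->.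
by case/andP=> /eqP-> /eqP->.
Qed.

Lemma linked_equiv : {in [set: 'I_n] & &, equivalence_rel (linked c M)}.
Proof.
move=> x y z _ _ _; split; first by rewrite /linked eqxx.
have [-> // | neq_xy] := eqVneq x y; move=> xy.
apply/idP/idP => [xz | yz].
  have [<- | neq_xz] := eqVneq x z; first by rewrite linkedC.
  by rewrite -(linked_uniq neq_xy neq_xz xy xz) /linked eqxx.
have [<- // | neq_yz] := eqVneq y z.
rewrite linkedC in xy.
by rewrite -(linked_uniq _ neq_yz xy yz) ?/linked ?eqxx // eq_sym.
Qed.

Definition matching_partition := equivalence_partition (linked c M) [set: 'I_n].

Lemma matching_partitionP : partition matching_partition [set: 'I_n].
Proof. exact: equivalence_partitionP linked_equiv. Qed.

Lemma same_block_matching_partition x y :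
  same_block matching_partition x y = linked c M x y.
Proof.
rewrite same_blockE ?matching_partitionP //.
by rewrite (pblock_equivalence_partition linked_equiv) ?inE.
Qed.

Lemma matching_partition_avoider : (matching_partition, c) \in avoiders n.
Proof.
apply/avoidersP; split=> [|x y neq|x y fxy]; first exact: matching_partitionP.
  by rewrite same_block_matching_partition; apply: linked_color.
by rewrite same_block_matching_partition /linked fxy !orbT.
Qed.

Lemma block_matching_partition : block_matching c matching_partition = M.
Proof.
have [sM _ _] := matchingsP _ _ _ matchingM.
apply/setP => -[x y]; rewrite mem_block_matching same_block_matching_partition.
apply/idP/idP => [/and3P[x2 y1] | xy]; last first.
  by case/andP: (sM _ _ xy) => -> ->; rewrite /linked xy orbT.
case/or4P=> [/eqP exy | // | /sM/andP[y2 _] | ].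
- by move: (free21 x2); rewrite exy y1.
- by move: (free21 y2); rewrite y1.
- by rewrite (free_forced _ x2).
Qed.

End MatchingPartition.

Lemma partition_block_matching P c : (P, c) \in avoiders n ->
  matching_partition c (block_matching c P) = P.
Proof.
move=> av; have [partP _ _] := avoidersP _ _ av.
rewrite -[RHS](equivalence_partition_pblock partP) /matching_partition.
apply: eq_imset => x; apply/setP => y.
by rewrite !inE -same_blockE // (same_block_linked _ _ av).
Qed.

Lemma card_avoiders_coloring c : (forall x y z, forced c x y -> forced c x z -> y = z) ->
  #|[set P | (P, c) \in avoiders n]| = #|matchings (free c col2) (free c col1)|.
Proof.
move=> forced_uniq.
have block_matching_inj : {in [set P | (P, c) \in avoiders n] &, injective (block_matching c)}.
  move=> P1 P2; rewrite [P1 \in _]inE [P2 \in _]inE => av1 av2 e.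
  by rewrite -(partition_block_matching av1) -(partition_block_matching av2) e.
rewrite -(card_in_imset block_matching_inj); apply: eq_card => M.
apply/imsetP/idP => [[P av ->] | matchingM].
  by rewrite [P \in _]inE in av; apply: block_matching_matchings.
exists (matching_partition c M); first by rewrite [_ \in _]inE matching_partition_avoider.
by rewrite block_matching_partition.
Qed.

Lemma avoider_no_gap P c : (P, c) \in avoiders n ->
  forall x z : 'I_n, x.+1 < z -> c x = col1 -> c z = col2 -> False.
Proof.
case/avoidersP=> partP rainbow forcedP x z ltxz cx cz.
have lty : x.+1 < n := ltn_trans ltxz (ltn_ord z).
pose y := Ordinal lty.
have xz : same_block P x z by apply: forcedP; rewrite /forced cx cz ltnW.
have neq_xy : x != y by rewrite -val_eqE /= neq_ltn ltnSn.
have neq_yz : y != z by rewrite -val_eqE /= neq_ltn ltxz.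
have [cy | ncy] := eqVneq (c y) col1.
  have yz : same_block P y z by apply: forcedP; rewrite /forced cy cz ltxz.
  have := rainbow _ _ neq_xy (same_block_trans partP xz (same_block_sym partP yz)).
  by rewrite cx cy eqxx.
have cy : c y = col2 by apply: (@ord2_neq col1); rewrite // eq_sym.
have xy : same_block P x y by apply: forcedP; rewrite /forced cx cy ltnSn.
have := rainbow _ _ neq_yz (same_block_trans partP (same_block_sym partP xy) xz).
by rewrite cy cz eqxx.
Qed.

Definition prefix_coloring p : {ffun 'I_n -> color} :=
  [ffun x : 'I_n => if x < p then col2 else col1].

Definition bump_coloring p : {ffun 'I_n -> color} :=
  [ffun x : 'I_n => if (x < p) || (x == p.+1 :> nat) then col2 else col1].

Lemma coloring_shapes c :
    (forall x z : 'I_n, x.+1 < z -> c x = col1 -> c z = col2 -> False) ->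
  (exists2 p, p <= n & c = prefix_coloring p) \/
  (exists2 p, p.+2 <= n & c = bump_coloring p).
Proof.
move=> no_gap.
pose first1 k := [forall x : 'I_n, (x == k :> nat) ==> (c x == col1)].
have first1n : first1 n by apply/forallP => x; rewrite eqn_leq [n <= x]leqNgt ltn_ord andbF.
have [p /forallP first1p minp] := ex_minnP (ex_intro first1 n first1n).
have lepn : p <= n := minp n first1n.
have at_p x : x = p :> nat -> c x = col1.
  by move=> xp; apply/eqP/(implyP (first1p x)); rewrite xp.
have below x : x < p -> c x = col2.
  move=> ltxp; apply: (@ord2_neq col1) => //; apply: contraTneq ltxp => cx.
  rewrite -leqNgt; apply: minp; apply/forallP => y; apply/implyP => /eqP yx.
  by rewrite (val_inj yx) cx.
have [/existsP[b /andP[ltpb /eqP cb]] | /existsPn no2] :=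
  boolP [exists b : 'I_n, (p < b) && (c b == col2)].
  have ltpn : p < n := ltn_trans ltpb (ltn_ord b).
  have cp := at_p (Ordinal ltpn) erefl.
  have bE : b = p.+1 :> nat.
    apply/eqP; rewrite eqn_leq ltpb andbT leqNgt; apply/negP => ltp1b.
    exact: no_gap (Ordinal ltpn) b ltp1b cp cb.
  right; exists p; first by rewrite -bE ltn_ord.
  apply/ffunP => x; rewrite ffunE.
  have [ltxp | lepx] /= := ltnP x p; first exact: below.
  have [xb | neq_xb] := eqVneq (x : nat) p.+1.
    by rewrite -cb; congr (c _); apply: val_inj; rewrite /= xb bE.
  have [xp | neq_xp] := eqVneq (x : nat) p; first exact: at_p.
  apply: (@ord2_neq col2) => //; apply/eqP => cx.
  apply: (no_gap (Ordinal ltpn) x) => //=.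
  by rewrite ltn_neqAle eq_sym neq_xb ltn_neqAle eq_sym neq_xp.
left; exists p => //; apply/ffunP => x; rewrite ffunE.
have [ltxp | lepx] := ltnP x p; first exact: below.
have [xp | neq_xp] := eqVneq (x : nat) p; first exact: at_p.
apply: (@ord2_neq col2) => //; apply/eqP => cx.
by move: (no2 x); rewrite ltn_neqAle eq_sym neq_xp lepx cx eqxx.
Qed.

Lemma card_ord_lt p : p <= n -> #|[set x : 'I_n | x < p]| = p.
Proof.
move=> lepn; have widen_inj : injective (widen_ord lepn).
  by move=> y z /(congr1 val) yz; apply: val_inj.
rewrite -[RHS]card_ord -(card_imset _ widen_inj).
apply: eq_card => x; rewrite inE; apply/idP/imsetP => [ltxp | [y _ ->]]; last by case: y.
by exists (Ordinal ltxp) => //; apply: val_inj.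
Qed.

Lemma card_ord_ge p : p <= n -> #|[set x : 'I_n | p <= x]| = n - p.
Proof.
move=> lepn; have := cardsC [set x : 'I_n | x < p]; rewrite card_ord_lt // card_ord.
have -> : ~: [set x : 'I_n | x < p] = [set x : 'I_n | p <= x].
  by apply/setP => x; rewrite !inE -leqNgt.
lia.
Qed.

Lemma forced_prefix p x y : forced (prefix_coloring p) x y = false.
Proof.
by rewrite /forced !ffunE; do 2 case: ifP; rewrite ?eqxx ?col12F ?col21F ?andbF //=; lia.
Qed.

Lemma free_prefix2 p : free (prefix_coloring p) col2 = [set x : 'I_n | x < p].
Proof.
apply/setP => x; rewrite !inE ffunE.
have -> : [forall y, ~~ forced (prefix_coloring p) x y].
  by apply/forallP => y; rewrite forced_prefix.
by case: ifP; rewrite ?col12F.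
Qed.

Lemma free_prefix1 p : free (prefix_coloring p) col1 = [set x : 'I_n | p <= x].
Proof.
apply/setP => x; rewrite !inE ffunE.
have -> : [forall y, ~~ forced (prefix_coloring p) x y].
  by apply/forallP => y; rewrite forced_prefix.
by case: ltnP; rewrite ?col21F.
Qed.

Lemma forced_bump p x y : forced (bump_coloring p) x y =
  (x == p :> nat) && (y == p.+1 :> nat) || (x == p.+1 :> nat) && (y == p :> nat).
Proof.
by rewrite /forced !ffunE; do 2 case: ifP; rewrite ?eqxx ?col12F ?col21F ?andbF //=; lia.
Qed.

Lemma free_bump2 p : free (bump_coloring p) col2 = [set x : 'I_n | x < p].
Proof.
apply/setP => x; rewrite !inE ffunE.
case: ifP => [x2 | x1]; rewrite ?col12F /=; last by lia.
have [ltxp | lepx] := ltnP x p; first by apply/forallP => y; rewrite forced_bump; lia.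
have ltpn : p < n by move: (ltn_ord x); lia.
by apply/negP => /forallP/(_ (Ordinal ltpn)); rewrite forced_bump /=; lia.
Qed.

Lemma free_bump1 p : p.+2 <= n -> free (bump_coloring p) col1 = [set x : 'I_n | p.+2 <= x].
Proof.
move=> lep2n; apply/setP => x; rewrite !inE ffunE.
case: ifP => [x2 | x1]; rewrite ?col21F ?eqxx ?andTb; first by lia.
have [xp | neq_xp] := eqVneq (x : nat) p.
  have ltp1n : p.+1 < n by lia.
  rewrite (_ : p.+2 <= x = false); last by lia.
  by apply/negbTE/forallPn; exists (Ordinal ltp1n); rewrite negbK forced_bump /=; lia.
have -> : [forall y, ~~ forced (bump_coloring p) x y].
  by apply/forallP => y; rewrite forced_bump; lia.
lia.
Qed.

Lemma card_prefix_avoiders p : p <= n ->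
  #|[set P | (P, prefix_coloring p) \in avoiders n]| = nmatchings p (n - p).
Proof.
move=> lepn; rewrite card_avoiders_coloring => [|x y z]; last by rewrite forced_prefix.
by rewrite card_matchings free_prefix2 free_prefix1 card_ord_lt ?card_ord_ge.
Qed.

Lemma card_bump_avoiders p : p.+2 <= n ->
  #|[set P | (P, bump_coloring p) \in avoiders n]| = nmatchings p (n - p.+2).
Proof.
move=> lep2n; rewrite card_avoiders_coloring => [|x y z]; last first.
  by rewrite !forced_bump => fxy fxz; apply: ord_inj; lia.
by rewrite card_matchings free_bump2 free_bump1 // card_ord_lt ?card_ord_ge //; lia.
Qed.

Lemma prefix_coloring_inj p1 p2 : p1 <= n -> p2 <= n ->
  prefix_coloring p1 = prefix_coloring p2 -> p1 = p2.
Proof.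
wlog lt12 : p1 p2 / p1 < p2 => [wlog_lt le1n le2n e|le1n le2n].
  case: (ltngtP p1 p2) => [lt12 | lt21 | //]; first exact: wlog_lt.
  exact/esym/(wlog_lt _ _ lt21 le2n le1n (esym e)).
move/ffunP/(_ (Ordinal (leq_trans lt12 le2n))); rewrite !ffunE /= ltnn lt12.
by move/eqP; rewrite col12F.
Qed.

Lemma bump_coloring_inj p1 p2 : p1.+2 <= n -> p2.+2 <= n ->
  bump_coloring p1 = bump_coloring p2 -> p1 = p2.
Proof.
wlog lt12 : p1 p2 / p1 < p2 => [wlog_lt le1n le2n e|le1n le2n].
  case: (ltngtP p1 p2) => [lt12 | lt21 | //]; first exact: wlog_lt.
  exact/esym/(wlog_lt _ _ lt21 le2n le1n (esym e)).
have ltp1n : p1 < n by lia.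
move/ffunP/(_ (Ordinal ltp1n)); rewrite !ffunE /= ltnn lt12.
rewrite (_ : p1 == p1.+1 = false); last by lia.
by move/eqP; rewrite col12F.
Qed.

Lemma prefix_neq_bump p1 p2 : p2.+2 <= n -> prefix_coloring p1 != bump_coloring p2.
Proof.
move=> lep2n; apply/eqP => /ffunP e.
have lt2n : p2 < n by lia.
have lt21n : p2.+1 < n by lia.
move: (e (Ordinal lt2n)) (e (Ordinal lt21n)); rewrite !ffunE /= ltnn eqxx orbT.
rewrite (_ : p2 == p2.+1 = false); last by lia.
by case: ltnP => lt2; case: ltnP => lt21 //; lia.
Qed.

Lemma card_avoiders_by_coloring :
  #|avoiders n| = \sum_(c : {ffun 'I_n -> color}) #|[set P | (P, c) \in avoiders n]|.
Proof.
rewrite -sum1_card (partition_big snd predT) //=; apply: eq_bigr => c _.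
have pair_inj : injective (fun P : {set {set 'I_n}} => (P, c)) by move=> P1 P2 [].
rewrite sum1dep_card -(card_imset _ pair_inj).
apply: eq_card => -[P c']; rewrite in_set /=.
apply/andP/imsetP => [[av /eqP /= ce] | [P' av' [-> ->]]].
  by rewrite -ce; exists P; rewrite // in_set.
by rewrite in_set in av'.
Qed.

Lemma sum_coloring_fibers :
  \sum_(c : {ffun 'I_n -> color}) #|[set P | (P, c) \in avoiders n]| =
  \sum_(p < n.+1) nmatchings p (n - p) + \sum_(p < n.-1) nmatchings p (n - p.+2).
Proof.
set A := [set prefix_coloring p | p : 'I_n.+1].
set B := [set bump_coloring p | p : 'I_n.-1].
have lep2n (p : 'I_n.-1) : p.+2 <= n by case: p => /= p; lia.
have outside c : c \notin A -> c \notin B -> #|[set P | (P, c) \in avoiders n]| = 0.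
  move=> nA nB; apply/eqP; rewrite cards_eq0; apply/eqP/setP => P.
  rewrite in_set in_set0; apply/negbTE/negP => av.
  have [[p lepn cE] | [p lep2n' cE]] := coloring_shapes (avoider_no_gap av).
    by case/imsetP: nA; exists (Ordinal (lepn : p < n.+1)).
  have ltpn2 : p < n.-1 by lia.
  by case/imsetP: nB; exists (Ordinal ltpn2).
rewrite (bigID (mem A)) /= [\sum_(c | c \notin A) _](bigID (mem B)) /=.
rewrite [\sum_(c | _ && (c \notin B)) _]big1 ?addn0 => [|c /andP[]]; last exact: outside.
rewrite [\sum_(c | _ && (c \in B)) _](eq_bigl (mem B)) => [|c]; last first.
  apply/andP/idP => [[] // | Bc]; split=> //; apply/imsetP => -[p1 _ e].
  case/imsetP: Bc e => p2 _ -> /eqP; rewrite eq_sym; apply/negP.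
  exact: prefix_neq_bump (lep2n p2).
rewrite !big_imset => [|p1 p2 _ _ /bump_coloring_inj e|p1 p2 _ _ /prefix_coloring_inj e].
- congr (_ + _); apply: eq_big => // p _; first by rewrite card_prefix_avoiders // -ltnS.
  exact: card_bump_avoiders.
- by apply: val_inj; apply: e.
- by apply: val_inj; apply: e; rewrite -ltnS.
Qed.

End ColoredPartitions.

Theorem mainTheorem3 (n : nat) (hn : 1 <= n) :
  #|avoiders n| =
    \sum_(0 <= j < n.+1) \sum_(1 <= i < n.+1) 'C(i - 1, j) * 'C(n - i, j) * j`!
  + \sum_(0 <= j < n.+1) \sum_(2 <= i < n.+1) (i - 1) * 'C(i - 2, j) * 'C(n - i, j) * j`!
  + \sum_(0 <= j < n.+1) \sum_(1 <= i < n) 'C(i - 1, j) * 'C(n - i - 1, j) * j`!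
  + 1.
Proof.
(* the identity also holds for n = 0 *)
by rewrite card_avoiders_by_coloring sum_coloring_fibers sum_nmatchings_formula.
Qed.
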